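(* Let $D$ be a regular $(v,k,\lambda,\mu)$-PDS in a finite group $G$ with $0<\mu<k$ and $\sqrt\Delta\in\mathbb{Z}$. If $\xi$ and $\chi$ are nonprincipal linear characters of $G$ whose orders are both coprime to $\sqrt\Delta$, then $\xi(D)=\chi(D)$.
   Context: A $(v,k,\lambda,\mu)$-PDS in a group $G$ of order $v$ is a $k$-subset $D$ such that every nonidentity element of $D$ is $xy^{-1}$ ($x,y\in D$) in exactly $\lambda$ ways and every nonidentity element of $G\setminus D$ in exactly $\mu$ ways; regular means $D=D^{(-1)}$ and $1\notin D$. $\Delta=(\lambda-\mu)^2+4(k-\mu)$; $\chi(D)=\sum_{d\in D}\chi(d)$. *)

From mathcomp Require Import all_boot all_order all_algebra all_fingroup all_solvable all_field all_character.
Set Implicit Arguments. Unset Strict Implicit. Unset Printing Implicit Defensive.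
Import GRing.Theory Num.Theory.

Local Open Scope group_scope.

Definition pds_count (gT : finGroupType) (D : {set gT}) (g : gT) : nat :=
  #|[set p : gT * gT | (p.1 \in D) && (p.2 \in D) && (p.1 * p.2^-1 == g)]|.

Definition is_PDS (gT : finGroupType) (G : {group gT}) (D : {set gT})
  (v k lam mu : nat) : Prop :=
  [/\ D \subset G, #|G| = v, #|D| = k,
      (forall g, g \in D -> g != 1 -> pds_count D g = lam) &
      (forall g, g \in G :\: D -> g != 1 -> pds_count D g = mu)].

Definition is_regular_PDS (gT : finGroupType) (G : {group gT}) (D : {set gT})
  (v k lam mu : nat) : Prop :=
  [/\ is_PDS G D v k lam mu, D^-1 = D & 1 \notin D].

Definition pds_Delta (k lam mu : nat) : int :=
  ((lam%:Z - mu%:Z) ^+ 2 + 4 * (k%:Z - mu%:Z))%R.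

Definition char_sum (gT : finGroupType) (G : {group gT}) (chi : 'CF(G))
  (D : {set gT}) : algC := (\sum_(d in D) chi d)%R.

From mathcomp Require Import all_boot all_order all_algebra all_fingroup all_solvable all_field all_character.
From mathcomp Require Import ring zify.
Set Implicit Arguments. Unset Strict Implicit. Unset Printing Implicit Defensive.
Import Order.TTheory GRing.Theory Num.Theory.
Local Open Scope ring_scope.

(* Counting the quotients x y^-1 in D gives, for every nonprincipal linear
   character psi, psi(D)^2 = (lam - mu) psi(D) + (k - mu), whose roots are
   integers r and r + s where s^2 = Delta.  Run psi over the family
   xi^a chi^b (a < #[xi], b < #[chi]), of size N coprime to s, and let f(y) be
   the sum of the psi(y) with psi(D) = r + s.  The whole family sums to a
   multiple of N at every point, hence so does sum_psi (psi(D) - r) psi(y),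
   which is a constant plus s f(y); as f is integral, f = x + N w with x = f(1)
   and w integer valued.  Orthogonality gives sum_y f(y) = 0 and
   sum_y f(y)^2 = |G| M, where M <= x p counts coincidences and p is the number
   of principal members; with w^2 + w >= 0 this forces x = 0 or x + p = N, so
   all nonprincipal members take the same value. *)

Lemma sum_expr_unity_root (R : idomainType) (z : R) (n : nat) :
  z ^+ n = 1 -> \sum_(i < n) z ^+ i = (n * (z == 1))%:R.
Proof.
have [-> _ | nz1 zn1] := eqVneq z 1.
  by rewrite muln1 (eq_bigr (fun _ => 1)) ?sumr_const ?card_ord // => i _; rewrite expr1n.
apply/eqP; move: (subrX1 z n); rewrite zn1 subrr muln0 => /esym/eqP.
by rewrite mulf_eq0 subr_eq0 (negPf nz1).
Qed.

Lemma quadratic_root_cases (R : idomainType) (c b a r s : R) :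
  c ^+ 2 = b * c + a -> b = 2 * r + s -> a = - (r * (r + s)) ->
  c = r \/ c = r + s.
Proof.
move=> quad_c def_b def_a; have : (c - r) * (c - (r + s)) = 0.
  by rewrite -[RHS](subrr (c ^+ 2)) {2}quad_c def_b def_a; ring.
by move/eqP; rewrite mulf_eq0 !subr_eq0 => /orP[] /eqP; [left | right].
Qed.

Lemma sqr_diff_even (t s K : int) :
  s ^+ 2 = t ^+ 2 + 4 * K -> exists r : int, t = 2 * r + s.
Proof.
move=> sqr_st; exists ((t - s) %/ 2)%Z.
have := divz_eq (t - s) 2; have := modz_ge0 (t - s) (isT : 2 != 0 :> int).
have := ltz_pmod (t - s) (isT : 0 < 2 :> int).
set q := ((t - s) %/ 2)%Z; set e := ((t - s) %% 2)%Z => e_lt2 e_ge0 def_ts.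
suff e0 : e = 0 by lia.
apply/eqP; rewrite eq_le e_ge0 andbT; apply/negP => e_gt0.
have def_t : t = s + 2 * q + 1 by lia.
move: sqr_st; rewrite def_t !expr2 => sqr_st.
have : 1 = 2 * (- 2 * K - 2 * q * q - 2 * q * s - 2 * q - s) by nia.
lia.
Qed.

Section LinearCharSums.

Variables (gT : finGroupType) (G : {group gT}).

Lemma cfdot_lin_char (phi psi : 'CF(G)) :
  phi \is a linear_char -> psi \is a linear_char -> '[phi, psi] = (phi == psi)%:R.
Proof.
move=> /lin_char_irr/irrP[i ->] /lin_char_irr/irrP[j ->].
by rewrite cfdot_irr (inj_eq irr_inj).
Qed.

Lemma sum_lin_char_mul_conjC (phi psi : 'CF(G)) :
  phi \is a linear_char -> psi \is a linear_char ->
  \sum_(x in G) phi x * (psi x)^* = #|G|%:R * (phi == psi)%:R.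
Proof.
move=> lin_phi lin_psi; rewrite -cfdot_lin_char // cfdotE mulrA divff ?mul1r //.
by rewrite pnatr_eq0 -lt0n cardG_gt0.
Qed.

Lemma sum_lin_char_eq0 (psi : 'CF(G)) :
  psi \is a linear_char -> psi != 1 -> \sum_(x in G) psi x = 0.
Proof.
move=> lin_psi psi_nt; have := sum_lin_char_mul_conjC lin_psi (cfun1_lin_char G).
rewrite (negPf psi_nt) mulr0 => sum0; rewrite -[RHS]sum0; apply: eq_bigr => x Gx.
by rewrite cfun1E Gx conjC1 mulr1.
Qed.

Lemma lin_char_cforder_unity (xi : 'CF(G)) x : x \in G -> xi x ^+ #[xi]%CF = 1.
Proof. by move: x; apply/dvdn_cforderP. Qed.

Lemma cforder_lin_char_gt1 (xi : 'CF(G)) :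
  xi \is a linear_char -> xi != 1 -> (1 < #[xi]%CF)%N.
Proof.
move=> lin_xi xi_nt; rewrite ltn_neqAle cforder_lin_char_gt0 // andbT.
by apply: contra xi_nt => /eqP o1; rewrite -[xi]expr1 o1 exp_cforder.
Qed.

Lemma sum_lin_char_powers (xi : 'CF(G)) x : x \in G ->
  \sum_(i < #[xi]%CF) (xi ^+ i) x = (#[xi]%CF * (xi x == 1))%:R.
Proof.
move=> Gx; rewrite -sum_expr_unity_root ?lin_char_cforder_unity //.
by apply: eq_bigr => i _; rewrite exp_cfunE.
Qed.

Lemma sum_lin_char_power_pairs (xi chi : 'CF(G)) y : y \in G ->
  exists c : nat, \sum_(p : 'I_#[xi]%CF * 'I_#[chi]%CF) (xi ^+ p.1 * chi ^+ p.2) y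
                    = (#|{: 'I_#[xi]%CF * 'I_#[chi]%CF}| * c)%:R.
Proof.
move=> Gy; exists ((xi y == 1%R) * (chi y == 1%R))%N.
under eq_bigr do rewrite cfunE.
rewrite -(pair_bigA _ (fun (i : 'I_#[xi]%CF) (j : 'I_#[chi]%CF) =>
  (xi ^+ i) y * (chi ^+ j) y)) -big_distrlr /=.
by rewrite !sum_lin_char_powers // -natrM card_prod !card_ord mulnACA.
Qed.

Lemma card_lin_char_fiber (I : finType) (psi : I -> 'CF(G)) (phi : 'CF(G)) :
  (forall i, psi i \is a linear_char) -> phi \is a linear_char ->
  #|[pred j | psi j == phi]|%:R =
    #|G|%:R^-1 * \sum_(y in G) (\sum_j psi j y) * (phi y)^*.
Proof.
move=> lin_psi lin_phi; rewrite -[#|[pred j | _]|]sum1_card natr_sum big_mkcond /=.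
rewrite (eq_bigr (fun j => '[psi j, phi])); last first.
  by move=> j _; rewrite cfdot_lin_char // inE; case: (psi j == phi).
under eq_bigr do rewrite cfdotE.
rewrite -mulr_sumr exchange_big /=; congr (_ * _).
by apply: eq_bigr => y _; rewrite mulr_suml.
Qed.

Lemma card_lin_char_fiber_le (I : finType) (psi : I -> 'CF(G)) (phi : 'CF(G)) :
  (forall i, psi i \is a linear_char) -> phi \is a linear_char ->
  (forall y, y \in G -> 0 <= \sum_i psi i y) ->
  (#|[pred j | psi j == phi]| <= #|[pred j | psi j == 1%R]|)%N.
Proof.
move=> lin_psi lin_phi sum_psi_ge0.
rewrite -(ler_nat algC) -[X in X <= _]normr_nat.
rewrite !card_lin_char_fiber ?cfun1_lin_char // normrM ger0_norm ?invr_ge0 ?ler0n //.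
apply: ler_wpM2l; first by rewrite invr_ge0 ler0n.
apply: le_trans (ler_norm_sum _ _ _) _; apply: ler_sum => y Gy.
rewrite cfun1E Gy conjC1 mulr1 normrM norm_conjC normC_lin_char // mulr1.
by rewrite ger0_norm ?sum_psi_ge0.
Qed.

End LinearCharSums.

Lemma pds_count1 (gT : finGroupType) (D : {set gT}) : pds_count D 1%g = #|D|.
Proof.
rewrite /pds_count -(card_imset D (fun x y (e : (x, x) = (y, y)) => congr1 fst e)).
apply: eq_card => -[x y]; rewrite inE /=; apply/idP/imsetP.
  by move=> /andP[/andP[xD yD]]; rewrite -eq_mulgV1 => /eqP <-; exists x.
by move=> [z zD [-> ->]]; rewrite zD mulgV eqxx.
Qed.

Lemma char_sum_sqr (gT : finGroupType) (G : {group gT}) (D : {set gT})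
    (psi : 'CF(G)) :
  D \subset G -> D^-1%g = D -> psi \is a linear_char ->
  char_sum psi D ^+ 2 = \sum_(g in G) (pds_count D g)%:R * psi g.
Proof.
move=> sDG DV lin_psi; have DG x : x \in D -> x \in G by apply: (subsetP sDG).
have -> : char_sum psi D ^+ 2 =
    \sum_(p | (p.1 \in D) && (p.2 \in D)) psi (p.1 * p.2^-1)%g.
  rewrite expr2 /char_sum {2}(reindex_inj invg_inj) /=.
  rewrite [X in _ * X](eq_bigl (mem D)) => [|y /=]; last by rewrite -{2}DV mem_invg.
  rewrite big_distrlr pair_big_dep /=; apply: eq_bigr => -[x y] /andP[xD yD] /=.
  by rewrite lin_charM ?groupV ?DG.
rewrite (partition_big (fun p => p.1 * p.2^-1)%g (mem G)) /=; last first.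
  by move=> -[x y] /andP[xD yD] /=; rewrite groupM ?groupV ?DG.
apply: eq_bigr => g Gg; rewrite (eq_bigr (fun _ => psi g)); last first.
  by move=> p /andP[_ /eqP ->].
by rewrite -big_set sumr_const /pds_count mulr_natl.
Qed.

Section RegularPDS.

Variables (gT : finGroupType) (G : {group gT}) (D : {set gT}) (v k lam mu : nat).
Hypothesis pdsD : is_regular_PDS G D v k lam mu.

Lemma pds_countE g : g \in G ->
  (pds_count D g)%:R = mu%:R + (lam%:R - mu%:R) * (g \in D)%:R
                       + (k%:R - mu%:R) * (g == 1%g)%:R :> algC.
Proof.
have [[_ _ cardD lamD muD] _ notD1] := pdsD.
move=> Gg; have [-> | g_nt] := eqVneq g 1%g.
  by rewrite pds_count1 cardD (negPf notD1) /=; ring.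
have [Dg | notDg] := boolP (g \in D).
  by rewrite lamD //=; ring.
by rewrite muD ?inE ?notDg //=; ring.
Qed.

Lemma pds_char_sum_quadratic (psi : 'CF(G)) :
  psi \is a linear_char -> psi != 1 ->
  char_sum psi D ^+ 2 = (lam%:R - mu%:R) * char_sum psi D + (k%:R - mu%:R).
Proof.
have [[sDG _ _ _ _] DV _] := pdsD; move=> lin_psi psi_nt.
have sum_D : \sum_(g in G) (g \in D)%:R * psi g = char_sum psi D.
  rewrite (big_setID D) /= (setIidPr sDG) [X in _ + X]big1 ?addr0.
    by rewrite /char_sum; apply: eq_bigr => g ->; exact: mul1r.
  by move=> g /setDP[_ /negPf->]; exact: mul0r.
have sum_1 : \sum_(g in G) (g == 1%g)%:R * psi g = 1.
  rewrite (bigD1 1%g) ?group1 //= big1 ?eqxx ?mul1r ?lin_char1 ?addr0 //.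
  by move=> g /andP[_ /negPf->]; exact: mul0r.
rewrite char_sum_sqr //; transitivity (\sum_(g in G) (mu%:R * psi g
    + (lam%:R - mu%:R) * ((g \in D)%:R * psi g) + (k%:R - mu%:R) * ((g == 1%g)%:R * psi g))).
  by apply: eq_bigr => g Gg; rewrite pds_countE //; ring.
by rewrite !big_split -!mulr_sumr /= sum_lin_char_eq0 // sum_D sum_1 mulr0 add0r mulr1.
Qed.

Lemma pds_char_sum_cases (s : nat) : s%:Z ^+ 2 = pds_Delta k lam mu ->
  exists r : int, forall psi : 'CF(G), psi \is a linear_char -> psi != 1 ->
    char_sum psi D = r%:~R \/ char_sum psi D = r%:~R + s%:R.
Proof.
move=> sqr_s; have [r def_lm] := sqr_diff_even sqr_s.
have def_km : k%:Z - mu%:Z = - (r * (r + s%:Z)).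
  by move: sqr_s; rewrite /pds_Delta def_lm !expr2; nia.
exists r => psi lin_psi psi_nt.
apply: quadratic_root_cases (pds_char_sum_quadratic lin_psi psi_nt) _ _.
  by rewrite -[lam%:R]/(lam%:Z%:~R) -[mu%:R]/(mu%:Z%:~R) -rmorphB def_lm rmorphD rmorphM.
by rewrite -[k%:R]/(k%:Z%:~R) -[mu%:R]/(mu%:Z%:~R) -rmorphB def_km rmorphN rmorphM rmorphD.
Qed.

End RegularPDS.

Lemma sum_sqr_shift_dichotomy (T : finType) (A : {pred T}) (w : T -> int)
    (x p N M : int) :
  (0 < #|A|)%N -> 0 < N -> 0 <= x -> 0 <= p ->
  \sum_(y in A) (x + N * w y) = 0 ->
  \sum_(y in A) (x + N * w y) ^+ 2 = #|A|%:Z * M ->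
  M <= x * p -> x + p <= N -> x = 0 \/ x + p = N.
Proof.
move=> A_gt0 N_gt0 x_ge0 p_ge0.
have -> : \sum_(y in A) (x + N * w y) = #|A|%:Z * x + N * \sum_(y in A) w y.
  by rewrite big_split /= sumr_const -mulr_sumr -mulr_natl natz.
have -> : \sum_(y in A) (x + N * w y) ^+ 2 = #|A|%:Z * x ^+ 2
    + 2 * x * N * \sum_(y in A) w y + N ^+ 2 * \sum_(y in A) w y ^+ 2.
  rewrite (eq_bigr (fun y => x ^+ 2 + 2 * x * N * w y + N ^+ 2 * w y ^+ 2)).
    by rewrite !big_split /= sumr_const -!mulr_sumr -[x ^+ 2 *+ _]mulr_natl natz.
  by move=> y _; ring.
(* integrality: [w ^+ 2 + w >= 0] on [int] *)
have : 0 <= \sum_(y in A) w y ^+ 2 + \sum_(y in A) w y.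
  by rewrite -big_split sumr_ge0 // => y _ /=; rewrite expr2; nia.
have : 0 < #|A|%:Z by rewrite ltz_nat.
move: #|A|%:Z (\sum_(y in A) w y) (\sum_(y in A) w y ^+ 2) => g W Q g_gt0 QW_ge0.
rewrite !expr2 => mean0 sqr_mean M_le x_p_le.
have sqr_meanE : N * N * Q = g * (M + x * x) by nia.
have : N * g * x <= g * (M + x * x) by nia.
have : x * N <= M + x * x by nia.
nia.
Qed.

Section UniformCharSum.

Variables (gT : finGroupType) (G : {group gT}) (D : {set gT}).
Variables (I : finType) (psi : I -> 'CF(G)) (r : int) (s : nat).
Hypotheses (sDG : D \subset G) (psi_lin : forall i, psi i \is a linear_char).
Hypothesis coprime_I_s : coprime #|I| s.
Hypothesis sum_psi_dvd :
  forall y, y \in G -> exists c : nat, \sum_i psi i y = (#|I| * c)%:R.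
Hypothesis char_sum_psi : forall i, psi i != 1 ->
  char_sum (psi i) D = r%:~R \/ char_sum (psi i) D = r%:~R + s%:R.

Local Notation N := #|I|.

Definition principal_idx := [set i | psi i == 1].
Definition upper_idx :=
  [set i | (psi i != 1) && (char_sum (psi i) D == r%:~R + s%:R)].
Definition upper_sum y := \sum_(i in upper_idx) psi i y.

Lemma sum_shifted_char_sum_dvd y : y \in G ->
  exists e : int, \sum_i (char_sum (psi i) D - r%:~R) * psi i y = N%:R * e%:~R.
Proof.
move=> Gy; have [c1 sum_psi] := sum_psi_dvd Gy.
have [c2 sum_char_sum] : exists c : nat,
    \sum_i char_sum (psi i) D * psi i y = (N * c)%:R.
  have -> : \sum_i char_sum (psi i) D * psi i y = \sum_(d in D) \sum_i psi i (d * y)%g.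
    rewrite exchange_big /=; apply: eq_bigr => i _; rewrite /char_sum mulr_suml.
    by apply: eq_bigr => d /(subsetP sDG) Gd; rewrite (lin_charM (psi_lin i)).
  apply: (big_ind (fun z => exists c : nat, z = (N * c)%:R)).
  - by exists 0%N; rewrite muln0.
  - by move=> _ _ [a ->] [b ->]; exists (a + b)%N; rewrite mulnDr natrD.
  - by move=> d /(subsetP sDG) Gd; apply: sum_psi_dvd; rewrite groupM.
exists (c2%:Z - r * c1%:Z); rewrite rmorphB rmorphM /= !pmulrn -!natz.
under eq_bigr do rewrite mulrBl.
by rewrite sumrB -mulr_sumr sum_psi sum_char_sum !natrM; ring.
Qed.

Lemma sum_shifted_char_sum y : y \in G ->
  \sum_i (char_sum (psi i) D - r%:~R) * psi i y =
    #|principal_idx|%:R * (#|D|%:R - r%:~R) + s%:R * upper_sum y.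
Proof.
move=> Gy; rewrite (bigID (mem principal_idx)) /=; congr (_ + _).
  rewrite (eq_bigr (fun _ => #|D|%:R - r%:~R)) ?sumr_const ?mulr_natl //.
  move=> i; rewrite inE => /eqP ->; rewrite cfun1E Gy mulr1 /char_sum.
  by rewrite (eq_bigr (fun _ => 1)) ?sumr_const // => d /(subsetP sDG) Gd; rewrite cfun1E Gd.
rewrite (bigID (mem upper_idx)) /= [X in _ + X]big1 ?addr0; last first.
  move=> i /andP[]; rewrite !inE => psi_nt not_upper.
  have [->|upper] := char_sum_psi psi_nt; first by rewrite subrr mul0r.
  by rewrite upper eqxx psi_nt in not_upper.
rewrite /upper_sum mulr_sumr; apply: eq_big => i.
  by rewrite !inE; case: (psi i == 1).
by rewrite !inE => /andP[_ /andP[_ /eqP ->]]; rewrite addrC addKr.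
Qed.

Lemma upper_sum1 : upper_sum 1%g = #|upper_idx|%:R.
Proof.
rewrite /upper_sum (eq_bigr (fun _ => 1)) ?sumr_const // => i _.
exact: lin_char1.
Qed.

Lemma upper_sum_congr y : (0 < s)%N -> y \in G ->
  exists w : int, upper_sum y = (#|upper_idx|%:Z + N%:Z * w)%:~R.
Proof.
move=> s_gt0 Gy; have [e1 E1] := sum_shifted_char_sum_dvd Gy.
have [e0 E0] := sum_shifted_char_sum_dvd (group1 G).
rewrite sum_shifted_char_sum // in E1; rewrite sum_shifted_char_sum // in E0.
set d := upper_sum y - upper_sum 1%g.
have s_d : s%:R * d = N%:R * (e1 - e0)%:~R.
  by rewrite rmorphB /= mulrBr mulrBr -E1 -E0; ring.
have s_neq0 : s%:R != 0 :> algC by rewrite pnatr_eq0 -lt0n.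
(* [d] is an algebraic integer and a rational, hence an integer *)
have : d \is a Num.int.
  apply: Cint_rat_Aint.
    rewrite -(mulKf s_neq0 d) s_d.
    rewrite rpredM ?rpredV ?rpred_nat //.
    by apply: rpredM; [exact: rpred_nat | exact: rpred_int].
  by rewrite rpredB ?rpred_sum // => i _; apply/Aint_char/lin_charW.
case/intrP=> m def_d.
have N_dvd_m : (N%:Z %| m)%Z.
  rewrite -(@Gauss_dvdzl _ _ s%:Z) ?coprimezE //; apply/dvdzP; exists (e1 - e0).
  apply: (@intr_inj algC); rewrite !intrM -def_d.
  by rewrite -[s%:Z]natz -[N%:Z]natz !rmorph_nat mulrC s_d mulrC.
exists (m %/ N%:Z)%Z; rewrite mulrC divzK // rmorphD /= -def_d /d.
by rewrite -[#|upper_idx|%:Z]natz rmorph_nat -upper_sum1; ring.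
Qed.

Lemma sum_upper_sum : \sum_(y in G) upper_sum y = 0.
Proof.
rewrite /upper_sum exchange_big /= big1 // => i; rewrite inE => /andP[psi_nt _].
exact: sum_lin_char_eq0.
Qed.

Definition upper_coincidences :=
  (\sum_(i in upper_idx) \sum_(j in upper_idx) (psi i == psi j))%N.

Lemma sum_upper_sum_sqr :
  \sum_(y in G) upper_sum y * (upper_sum y)^* = #|G|%:R * upper_coincidences%:R.
Proof.
rewrite /upper_sum; under eq_bigr do rewrite rmorph_sum big_distrlr /=.
rewrite exchange_big /=; under eq_bigr do rewrite exchange_big /=.
rewrite natr_sum mulr_sumr; apply: eq_bigr => i _.
by rewrite natr_sum mulr_sumr; apply: eq_bigr => j _; rewrite sum_lin_char_mul_conjC.
Qed.

Lemma upper_coincidences_le :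
  (upper_coincidences <= #|upper_idx| * #|principal_idx|)%N.
Proof.
have sum_psi_ge0 y : y \in G -> 0 <= \sum_i psi i y.
  by move=> Gy; have [c ->] := sum_psi_dvd Gy; rewrite ler0n.
rewrite -sum_nat_const; apply: leq_sum => i _.
have -> : #|principal_idx| = #|[pred j | psi j == 1%R]| by apply: eq_card => j; rewrite inE.
apply: leq_trans (card_lin_char_fiber_le psi_lin (psi_lin i) sum_psi_ge0).
rewrite -sum1_card [X in (_ <= X)%N]big_mkcond [X in (X <= _)%N]big_mkcond /=.
apply: leq_sum => j _.
by case: (j \in upper_idx); rewrite inE /= eq_sym; case: (psi i == psi j).
Qed.

Lemma card_upper_principal :
  #|upper_idx :|: principal_idx| = (#|upper_idx| + #|principal_idx|)%N.
Proof.
rewrite cardsU (_ : upper_idx :&: principal_idx = set0) ?cards0 ?subn0 //.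
by apply/setP => i; rewrite !inE; case: (psi i == 1); rewrite ?andbF.
Qed.

Lemma upper_idx_dichotomy : (0 < s)%N ->
  upper_idx = set0 \/ upper_idx :|: principal_idx = setT.
Proof.
move=> s_gt0; have [N0 | N_gt0] := posnP N.
  by left; apply/eqP; rewrite -cards_eq0 -leqn0 -N0 max_card.
have /fin_all_exists[w def_w] : forall y, exists w : int,
    y \in G -> upper_sum y = (#|upper_idx|%:Z + N%:Z * w)%:~R.
  move=> y; have [Gy | _] := boolP (y \in G); last by exists 0.
  by have [w ->] := upper_sum_congr s_gt0 Gy; exists w.
have mean0 : \sum_(y in G) (#|upper_idx|%:Z + N%:Z * w y) = 0.
  apply: (@intr_inj algC); rewrite rmorph_sum /= -[RHS]sum_upper_sum.
  by apply: eq_bigr => y Gy; rewrite def_w.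
have sqr_mean : \sum_(y in G) (#|upper_idx|%:Z + N%:Z * w y) ^+ 2
    = #|G|%:Z * upper_coincidences%:Z.
  apply: (@intr_inj algC); rewrite rmorph_sum rmorphM /= -[#|G|%:Z]natz rmorph_nat.
  rewrite -[upper_coincidences%:Z]natz rmorph_nat -sum_upper_sum_sqr.
  by apply: eq_bigr => y Gy; rewrite def_w // rmorphXn /= rmorph_int expr2.
have M_le : upper_coincidences%:Z <= #|upper_idx|%:Z * #|principal_idx|%:Z.
  by rewrite -PoszM lez_nat upper_coincidences_le.
have UP_le : #|upper_idx|%:Z + #|principal_idx|%:Z <= N%:Z.
  by rewrite -PoszD lez_nat -card_upper_principal max_card.
have [|||[] /eqP | /eqP] :=
  sum_sqr_shift_dichotomy (cardG_gt0 G) _ _ _ mean0 sqr_mean M_le UP_le => //.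
  by rewrite cards_eq0 => /eqP; left.
rewrite -PoszD eqz_nat -card_upper_principal => /eqP card_UP.
by right; apply/eqP; rewrite eqEcard subsetT cardsT card_UP leqnn.
Qed.

Lemma char_sum_uniform i j : psi i != 1 -> psi j != 1 ->
  char_sum (psi i) D = char_sum (psi j) D.
Proof.
move=> psi_i_nt psi_j_nt; have [s0 | s_gt0] := posnP s.
  move: (char_sum_psi psi_i_nt) (char_sum_psi psi_j_nt).
  by rewrite s0 addr0 => -[] -> [] ->.
have [upper0 | upperT] := upper_idx_dichotomy s_gt0.
  suff lower k : psi k != 1 -> char_sum (psi k) D = r%:~R by rewrite !lower.
  move=> psi_k_nt; have : k \notin upper_idx by rewrite upper0 inE.
  by rewrite inE psi_k_nt /=; case: (char_sum_psi psi_k_nt) => // ->; rewrite eqxx.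
suff upper k : psi k != 1 -> char_sum (psi k) D = r%:~R + s%:R by rewrite !upper.
move=> psi_k_nt; have : k \in upper_idx :|: principal_idx by rewrite upperT inE.
by rewrite !inE (negPf psi_k_nt) orbF /= => /eqP.
Qed.

End UniformCharSum.

Theorem mainTheorem7 (gT : finGroupType) (G : {group gT}) (D : {set gT})
  (v k lam mu : nat) (s : nat) (xi chi : 'CF(G)) :
  is_regular_PDS G D v k lam mu ->
  (0 < mu)%N -> (mu < k)%N ->
  (s%:Z ^+ 2)%R = pds_Delta k lam mu ->
  xi \is a linear_char -> xi != 1%R ->
  chi \is a linear_char -> chi != 1%R ->
  coprime #[xi]%CF s -> coprime #[chi]%CF s ->
  char_sum xi D = char_sum chi D.
Proof.
move=> pdsD _ _ sqr_s lin_xi xi_nt lin_chi chi_nt coprime_xi coprime_chi.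
have [[sDG _ _ _ _] _ _] := pdsD.
have [r char_sum_cases] := pds_char_sum_cases pdsD sqr_s.
pose psi (p : 'I_#[xi]%CF * 'I_#[chi]%CF) : 'CF(G) := xi ^+ p.1 * chi ^+ p.2.
have psi_lin p : psi p \is a linear_char by rewrite rpredM ?rpredX.
have coprime_I : coprime #|{: 'I_#[xi]%CF * 'I_#[chi]%CF}| s.
  by rewrite card_prod !card_ord coprimeMl coprime_xi.
pose i_xi := (Ordinal (cforder_lin_char_gt1 lin_xi xi_nt),
              Ordinal (cforder_lin_char_gt0 lin_chi)).
pose i_chi := (Ordinal (cforder_lin_char_gt0 lin_xi),
               Ordinal (cforder_lin_char_gt1 lin_chi chi_nt)).
have psi_xi : psi i_xi = xi by rewrite /psi /= expr1 expr0 mulr1.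
have psi_chi : psi i_chi = chi by rewrite /psi /= expr1 expr0 mul1r.
rewrite -psi_xi -psi_chi; apply: (char_sum_uniform sDG psi_lin coprime_I).
- exact: sum_lin_char_power_pairs.
- by move=> p; apply: char_sum_cases.
- by rewrite psi_xi.
- by rewrite psi_chi.
Qed.
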